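(* Let $(\mathfrak g,[\cdot,\cdot],[\![\cdot,\cdot,\cdot]\!];\omega)$ be a symplectic Lie-Yamaguti algebra and let $( *,\{\cdot,\cdot,\cdot\})$ be the compatible pre-Lie-Yamaguti algebra structure on $\mathfrak g$ determined by $\omega(x*y,z)=-\omega(y,[x,z])$ and $\omega(\{x,y,z\},w)=\omega(x,[\![w,z,y]\!])$. Then $\omega(\{x,y,z\}_D,w)=-\omega(z,[\![x,y,w]\!])$ for all $x,y,z,w\in\mathfrak g$.
   Context: All vector spaces are over a field of characteristic $0$. A Lie-Yamaguti algebra is a vector space $\mathfrak g$ with a bilinear skew-symmetric $[\cdot,\cdot]$ and a trilinear $[\![\cdot,\cdot,\cdot]\!]$ skew-symmetric in its first two arguments such that for all $x,y,z,w,t$: (1) $[[x,y],z]+[[y,z],x]+[[z,x],y]+[\![x,y,z]\!]+[\![y,z,x]\!]+[\![z,x,y]\!]=0$; (2) $[\![[x,y],z,w]\!]+[\![[y,z],x,w]\!]+[\![[z,x],y,w]\!]=0$; (3) $[\![x,y,[z,w]]\!]=[[\![x,y,z]\!],w]+[z,[\![x,y,w]\!]]$; (4) $[\![x,y,[\![z,w,t]\!]]\!]=[\![[\![x,y,z]\!],w,t]\!]+[\![z,[\![x,y,w]\!],t]\!]+[\![z,w,[\![x,y,t]\!]]\!]$. A symplectic Lie-Yamaguti algebra is one equipped with a nondegenerate skew-symmetric bilinear form $\omega$ such that for all $x,y,z,w$: $\omega(x,[y,z])+\omega(y,[z,x])+\omega(z,[x,y])=0$ and $\omega(z,[\![x,y,w]\!])-\omega(x,[\![w,z,y]\!])+\omega(y,[\![w,z,x]\!])-\omega(w,[\![x,y,z]\!])=0$.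 For operations $*$ and $\{\cdot,\cdot,\cdot\}$ on $\mathfrak g$, $(x,y,z):=(x*y)*z-x*(y*z)$ and $\{x,y,z\}_D:=\{z,y,x\}-\{z,x,y\}+(y,x,z)-(x,y,z)$. (That the operations defined by the two displayed formulas form a pre-Lie-Yamaguti algebra compatible with $\mathfrak g$ is part of the setting.) *)

From HB Require Import structures.
From mathcomp Require Import all_boot all_order all_algebra.
Set Implicit Arguments. Unset Strict Implicit. Unset Printing Implicit Defensive.
Import GRing.Theory.
Local Open Scope ring_scope.

Section LY.
Variables (F : fieldType) (V : lmodType F).

Definition bilinear_skew (br : V -> V -> V) : Prop :=
  (forall (a : F) x y z, br (a *: x + y) z = a *: br x z + br y z) /\
  (forall x y, br x y = - br y x).

Definition trilinear_skew12 (tr : V -> V -> V -> V) : Prop :=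
  (forall (a : F) x x' y z, tr (a *: x + x') y z = a *: tr x y z + tr x' y z) /\
  (forall (a : F) x y y' z, tr x (a *: y + y') z = a *: tr x y z + tr x y' z) /\
  (forall (a : F) x y z z', tr x y (a *: z + z') = a *: tr x y z + tr x y z') /\
  (forall x y z, tr x y z = - tr y x z).

Definition LieYamaguti (br : V -> V -> V) (tr : V -> V -> V -> V) : Prop :=
  bilinear_skew br /\ trilinear_skew12 tr /\
   (forall x y z, br (br x y) z + br (br y z) x + br (br z x) y
                  + tr x y z + tr y z x + tr z x y = 0) /\
   (forall x y z w, tr (br x y) z w + tr (br y z) x w + tr (br z x) y w = 0) /\
   (forall x y z w, tr x y (br z w) = br (tr x y z) w + br z (tr x y w)) /\
   (forall x y z w t, tr x y (tr z w t)
      = tr (tr x y z) w t + tr z (tr x y w) t + tr z w (tr x y t)).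

Definition symplectic_form (om : V -> V -> F) : Prop :=
  [/\ (forall (a : F) x y z, om (a *: x + y) z = a * om x z + om y z),
      (forall x y, om x y = - om y x) &
      (forall x, (forall y, om x y = 0) -> x = 0)].

Definition symplectic_LY (br : V -> V -> V) (tr : V -> V -> V -> V)
    (om : V -> V -> F) : Prop :=
  [/\ LieYamaguti br tr, symplectic_form om,
   (forall x y z, om x (br y z) + om y (br z x) + om z (br x y) = 0) &
   (forall x y z w, om z (tr x y w) - om x (tr w z y) + om y (tr w z x)
                    - om w (tr x y z) = 0)].

Definition assoc (mul : V -> V -> V) (x y z : V) : V :=
  mul (mul x y) z - mul x (mul y z).

Definition bracketD (mul : V -> V -> V) (br3 : V -> V -> V -> V) (x y z : V) : V :=
  br3 z y x - br3 z x y + assoc mul y x z - assoc mul x y z.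

End LY.

From mathcomp Require Import all_boot all_order all_algebra.
From mathcomp Require Import ring.
Set Implicit Arguments.
Unset Strict Implicit.
Unset Printing Implicit Defensive.
Import GRing.Theory.
Local Open Scope ring_scope.

(* Both operations are adjoints under [om]: [mul x] of [- br x], and [br3] of
   [tr] with its arguments permuted.  The cyclic invariance of [om] makes the
   commutator of [mul] equal to [br], so pairing the associators in
   [{x,y,z}_D] with [w] gives [om z] of the Jacobiator of [x, y, w].  The first
   Lie-Yamaguti identity turns this Jacobiator into ternary brackets, which
   cancel against the [br3] terms by skew-symmetry of [tr]. *)

Section SkewForm.
Variables (F : fieldType) (V : lmodType F) (om : V -> V -> F).
Hypothesis om_linear : forall (a : F) x y z, om (a *: x + y) z = a * om x z + om y z.
Hypothesis om_skew : forall x y, om x y = - om y x.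

Lemma omDl x y z : om (x + y) z = om x z + om y z.
Proof. by have := om_linear 1 x y z; rewrite scale1r mul1r. Qed.

Lemma omNl x z : om (- x) z = - om x z.
Proof.
have om0l : om 0 z = 0 by apply: (addIr (om 0 z)); rewrite -omDl !add0r.
by rewrite -scaleN1r -[_ *: x]addr0 om_linear om0l addr0 mulN1r.
Qed.

Lemma omBl x y z : om (x - y) z = om x z - om y z.
Proof. by rewrite omDl omNl. Qed.

Lemma omDr x y z : om z (x + y) = om z x + om z y.
Proof. by rewrite om_skew omDl opprD -!om_skew. Qed.

Lemma omNr x z : om z (- x) = - om z x.
Proof. by rewrite om_skew omNl opprK -om_skew. Qed.

End SkewForm.

Section SkewBracket.
Variables (F : fieldType) (V : lmodType F) (br : V -> V -> V).
Hypothesis br_bilinear_skew : bilinear_skew br.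

Lemma brDl x y z : br (x + y) z = br x z + br y z.
Proof. by case: br_bilinear_skew => br_linear _; have := br_linear 1 x y z; rewrite !scale1r. Qed.

Lemma brNl x z : br (- x) z = - br x z.
Proof.
case: br_bilinear_skew => br_linear _.
have br0l : br 0 z = 0 by apply: (addIr (br 0 z)); rewrite -brDl !add0r.
by rewrite -scaleN1r -[_ *: x]addr0 br_linear br0l addr0 scaleN1r.
Qed.

Lemma brBl x y z : br (x - y) z = br x z - br y z.
Proof. by rewrite brDl brNl. Qed.

End SkewBracket.

Section LieYamagutiIdentities.
Variables (F : fieldType) (V : lmodType F).
Variables (br : V -> V -> V) (tr : V -> V -> V -> V).
Hypothesis br_bilinear_skew : bilinear_skew br.
Hypothesis LY_cyclic : forall x y z, br (br x y) z + br (br y z) x + br (br z x) y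
                                     + tr x y z + tr y z x + tr z x y = 0.

Lemma br_jacobiator x y w :
  br (br x y) w - br x (br y w) + br y (br x w)
  = - (tr x y w + tr y w x + tr w x y).
Proof.
case: br_bilinear_skew => _ br_skew.
rewrite (br_skew x (br y w)) opprK (br_skew y (br x w)) (br_skew x w) (brNl br_bilinear_skew) opprK.
by apply/eqP; rewrite -addr_eq0 !addrA LY_cyclic.
Qed.

End LieYamagutiIdentities.

Section AdjointOperations.
Variables (F : fieldType) (V : lmodType F).
Variables (br : V -> V -> V) (tr : V -> V -> V -> V) (om : V -> V -> F).
Variables (mul : V -> V -> V) (br3 : V -> V -> V -> V).
Hypothesis om_linear : forall (a : F) x y z, om (a *: x + y) z = a * om x z + om y z.
Hypothesis om_skew : forall x y, om x y = - om y x.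
Hypothesis om_nondeg : forall x, (forall y, om x y = 0) -> x = 0.
Hypothesis om_br_cyclic : forall x y z, om x (br y z) + om y (br z x) + om z (br x y) = 0.
Hypothesis br_bilinear_skew : bilinear_skew br.
Hypothesis om_mul : forall x y z, om (mul x y) z = - om y (br x z).
Hypothesis om_br3 : forall x y z w, om (br3 x y z) w = om x (tr w z y).

Lemma mul_commutator x y : mul x y - mul y x = br x y.
Proof.
case: br_bilinear_skew => _ br_skew.
apply/eqP; rewrite -subr_eq0; apply/eqP/om_nondeg => z.
rewrite !(omBl om_linear) !om_mul (om_skew (br x y)) (br_skew x z).
by rewrite (omNr om_linear om_skew) opprK -(om_br_cyclic x y z); ring.
Qed.

Lemma om_assoc x y z w :
  om (assoc mul x y z) w = - om z (br (mul x y) w) - om z (br y (br x w)).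
Proof. by rewrite /assoc (omBl om_linear) !om_mul opprK. Qed.

Lemma om_bracketD x y z w :
  om (bracketD mul br3 x y z) w
  = om z (tr w x y - tr w y x + (br (br x y) w - br x (br y w) + br y (br x w))).
Proof.
rewrite /bracketD (omBl om_linear) (omDl om_linear) (omBl om_linear).
rewrite !om_assoc !om_br3 -(mul_commutator x y) (brBl br_bilinear_skew).
by rewrite !(omDr om_linear om_skew, omNr om_linear om_skew); ring.
Qed.

End AdjointOperations.

Theorem corollary4p5 (F : fieldType) (V : lmodType F)
    (charF0 : [pchar F] =i pred0)
    (br : V -> V -> V) (tr : V -> V -> V -> V) (om : V -> V -> F)
    (mul : V -> V -> V) (br3 : V -> V -> V -> V) :
  symplectic_LY br tr om ->
  (forall x y z, om (mul x y) z = - om y (br x z)) ->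
  (forall x y z w, om (br3 x y z) w = om x (tr w z y)) ->
  forall x y z w, om (bracketD mul br3 x y z) w = - om z (tr x y w).
Proof.
move=> [[br_bs [[_ [_ [_ tr_skew]]] [LY_cyclic _]]] [om_lin om_skew om_nd] om_cyc _].
move=> om_mul om_br3 x y z w.
rewrite (om_bracketD om_lin om_skew om_nd om_cyc br_bs om_mul om_br3).
rewrite (br_jacobiator br_bs LY_cyclic) (tr_skew y w x).
by rewrite opprD opprB addrC subrKA addrC addKr -(omNr om_lin om_skew).
Qed.
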